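(* Let $m \ge 2$, $n \ge 2$, and for $1 \le i \le m$ let $f_i(x) = x^T A_i x + c_i^T x + d_i$ be quadratics on $\mathbb{R}^n$ with $A_i$ symmetric, where $f_1(x) = \|x\|^2 - 1$. For $2 \le i \le m$ let $U_i > 0$ satisfy $|f_i(x)| \le U_i$ for all $x$ with $\|x\|^2 \le 2$. Let (S1) be the system $f_i(x) \le 0$, $1 \le i \le m$, and let (S2) be the system in the real variables $v_0, x_1,\ldots,x_n, s_1,\ldots,s_m, w_2,\ldots,w_m$: $$x^T A_i x + c_i^T v_0 x + d_i v_0^2 + s_i^2 = 0, \quad 1 \le i \le m,$$ $$\frac{s_i^2 + w_i^2}{U_i} - v_0^2 = 0, \quad 2 \le i \le m,$$ $$\|x\|^2 + s_1^2 + \sum_{i=2}^m \frac{s_i^2 + w_i^2}{U_i} + v_0^2 = m+1.$$ Let $M$ denote the largest absolute value of a coefficient in (S2), and let $0 \le \epsilon < 1/2$. (a) If (S1) is $\epsilon$-feasible, then (S2) is $m\epsilon$-feasible. (b) Conversely, if (S2) is $\epsilon$-feasible, then (S1) is $(2n+1)M\epsilon$-feasible.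
   Context: For a system of inequalities $f_i(x)\le 0$, a vector $\hat x$ is $\epsilon$-feasible if $f_i(\hat x) \le \epsilon$ for all $i$, and the system is $\epsilon$-feasible if such a vector exists. For equations $h = 0$, $\epsilon$-feasibility means $|h| \le \epsilon$. *)

From HB Require Import structures.
From mathcomp Require Import all_boot all_order all_algebra.
From mathcomp Require Import reals.
Set Implicit Arguments. Unset Strict Implicit. Unset Printing Implicit Defensive.
Import Order.TTheory GRing.Theory Num.Theory.
Local Open Scope ring_scope.

Section Defs.
Variables (R : realType) (m n : nat).
Variables (A : 'I_m -> 'M[R]_n) (c : 'I_m -> 'cV[R]_n) (d : 'I_m -> R)
          (U : 'I_m -> R).

Definition sqnorm (x : 'cV[R]_n) : R := \sum_(j < n) x j 0 ^+ 2.

Definition qform (B : 'M[R]_n) (x : 'cV[R]_n) : R := (x^T *m B *m x) 0 0.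

Definition lform (b : 'cV[R]_n) (x : 'cV[R]_n) : R := (b^T *m x) 0 0.

Definition fq (i : 'I_m) (x : 'cV[R]_n) : R := qform (A i) x + lform (c i) x + d i.

Definition S1_feasible (eps : R) : Prop :=
  exists x : 'cV[R]_n, forall i : 'I_m, fq i x <= eps.

(* Left-hand sides minus right-hand sides of the equations of (S2).
   The index i : 'I_m with val i = 0 corresponds to f_1 of the paper;
   w (val i = 0) is a dummy variable appearing in no equation. *)
Definition S2_eq (i : 'I_m) (v0 : R) (x : 'cV[R]_n) (s : 'I_m -> R) : R :=
  qform (A i) x + v0 * lform (c i) x + d i * v0 ^+ 2 + s i ^+ 2.

Definition S2_mid (i : 'I_m) (v0 : R) (s w : 'I_m -> R) : R :=
  (s i ^+ 2 + w i ^+ 2) / U i - v0 ^+ 2.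

Definition S2_last (v0 : R) (x : 'cV[R]_n) (s w : 'I_m -> R) : R :=
  sqnorm x + \sum_(i < m | val i == 0%N) s i ^+ 2
  + \sum_(i < m | val i != 0%N) (s i ^+ 2 + w i ^+ 2) / U i
  + v0 ^+ 2 - (m.+1)%:R.

Definition S2_feasible (eps : R) : Prop :=
  exists (v0 : R) (x : 'cV[R]_n) (s w : 'I_m -> R),
    (forall i : 'I_m, `|S2_eq i v0 x s| <= eps) /\
    (forall i : 'I_m, val i != 0%N -> `|S2_mid i v0 s w| <= eps) /\
    `|S2_last v0 x s w| <= eps.

(* Largest absolute value of a coefficient of (S2), where each equation is
   read as a polynomial equation p = 0 (p = lhs - rhs) in the variables
   v0, x_1..x_n, s_1..s_m, w_2..w_m, and its coefficients are those of the
   monomials of p: for x^T A_i x the coefficient of x_j^2 is A_i(j,j) and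
   that of x_j x_k (j < k) is A_i(j,k) + A_i(k,j); c_i(j) for v0 x_j; d_i for
   v0^2; 1 for s_i^2; 1/U_i and -1 in the middle equations; 1, 1/U_i and the
   constant -(m+1) in the last equation. *)
Definition coef_quad (B : 'M[R]_n) : R :=
  \big[Num.max/0]_(j < n) \big[Num.max/0]_(k < n)
     (if j == k then `|B j j|
      else if (j < k)%N then `|B j k + B k j| else 0).

Definition coef_lin (b : 'cV[R]_n) : R := \big[Num.max/0]_(j < n) `|b j 0|.

Definition coef_eq (i : 'I_m) : R :=
  Num.max (coef_quad (A i)) (Num.max (coef_lin (c i)) (Num.max `|d i| 1)).

Definition coef_mid (i : 'I_m) : R :=
  if val i != 0%N then Num.max `|(U i)^-1| 1 else 0.

Definition S2_maxcoef : R :=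
  Num.max (\big[Num.max/0]_(i < m) Num.max (coef_eq i) (coef_mid i))
          (Num.max 1 `|(m.+1)%:R : R|).
End Defs.

From HB Require Import structures.
From mathcomp Require Import all_boot all_order all_algebra.
From mathcomp Require Import reals.
From mathcomp Require Import ring lra.
Set Implicit Arguments. Unset Strict Implicit. Unset Printing Implicit Defensive.
Import Order.TTheory GRing.Theory Num.Theory.
Local Open Scope ring_scope.

(* (a) Take v0 = 1, slacks s_i^2 = max(0, -f_i(x)) and complete each middle
   equation with w_i^2 = U_i - s_i^2, which is nonnegative because the bound
   |f_i| <= U_i applies on the ball ||x||^2 <= 1 + eps. Every residual is then
   max(f_i(x), 0) or 0.
   (b) Since f_1 = ||x||^2 - 1, its homogenization is ||x||^2 - v0^2; summing the
   first and middle equations against the last one forces v0^2 >= 1 - eps, and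
   x / v0 is feasible for (S1) because f_i(x / v0) = (S2_eq_i - s_i^2) / v0^2.
   These give the sharper tolerances eps and eps / (1 - eps). *)

Section QuadraticForms.
Variables (R : realType) (n : nat).
Implicit Types (a e : R) (B : 'M[R]_n) (b x : 'cV[R]_n).

Lemma qformZ a B x : qform B (a *: x) = a ^+ 2 * qform B x.
Proof. by rewrite /qform [(a *: x)^T]linearZ /= -!scalemxAl -scalemxAr !mxE expr2 mulrA. Qed.

Lemma lformZ a b x : lform b (a *: x) = a * lform b x.
Proof. by rewrite /lform -scalemxAr mxE. Qed.

Lemma sqnormZ a x : sqnorm (a *: x) = a ^+ 2 * sqnorm x.
Proof. by rewrite /sqnorm mulr_sumr; apply: eq_bigr => j _; rewrite mxE exprMn. Qed.

Lemma homogenize_scale B b e (v : R) x : v != 0 ->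
  v ^+ 2 * (qform B (v^-1 *: x) + lform b (v^-1 *: x) + e) =
  qform B x + v * lform b x + e * v ^+ 2.
Proof. by move=> v0; rewrite qformZ lformZ; field. Qed.

Lemma homogenize_sqnorm_sub1 B b e :
  (forall x, qform B x + lform b x + e = sqnorm x - 1) ->
  forall (v : R) x, qform B x + v * lform b x + e * v ^+ 2 = sqnorm x - v ^+ 2.
Proof.
move=> f1 v x.
have e1 : e = -1.
  have := f1 0; rewrite /qform /lform /sqnorm !mulmx0 !mxE big1 => [|j _].
    lra.
  by rewrite mxE expr0n.
have := f1 x; have := f1 ((-1) *: x).
rewrite qformZ lformZ sqnormZ sqrrN expr1n !mul1r e1; nra.
Qed.

End QuadraticForms.

Section Feasibility.
Variables (R : realType) (m n : nat) (A : 'I_m -> 'M[R]_n) (c : 'I_m -> 'cV[R]_n)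
  (d U : 'I_m -> R).

Lemma S1_feasible_le eps eps' :
  eps <= eps' -> S1_feasible A c d eps -> S1_feasible A c d eps'.
Proof. by move=> le_eps [x hx]; exists x => i; apply: le_trans le_eps. Qed.

Lemma S2_feasible_le eps eps' :
  eps <= eps' -> S2_feasible A c d U eps -> S2_feasible A c d U eps'.
Proof.
move=> le_eps [v0 [x [s [w [h1 [h2 h3]]]]]].
exists v0, x, s, w; split; [|split].
- by move=> i; apply: le_trans le_eps.
- by move=> i /h2 /le_trans; apply.
- exact: le_trans le_eps.
Qed.

Lemma S2_maxcoef_ge1 : 1 <= S2_maxcoef A c d U.
Proof. by rewrite /S2_maxcoef !le_max lexx orbT. Qed.

End Feasibility.

Lemma slack_residual (R : realDomainType) (a eps : R) : a <= eps -> 0 <= eps ->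
  `|a + Num.max 0 (- a)| <= eps.
Proof. by move=> ha he; rewrite maxEle; case: (leP 0 (- a)) => h; rewrite ler_norml; lra. Qed.

Section Reduction.
Variables (R : realType) (m n : nat) (A : 'I_m -> 'M[R]_n) (c : 'I_m -> 'cV[R]_n)
  (d U : 'I_m -> R) (i0 : 'I_m).
Hypothesis i0_first : val i0 = 0%N.
Hypothesis f1_sphere : forall x, fq A c d i0 x = sqnorm x - 1.

Lemma sum_first (F : 'I_m -> R) : \sum_(i < m | val i == 0%N) F i = F i0.
Proof.
apply: big_pred1 => i /=; rewrite -i0_first.
by apply/eqP/eqP => [/val_inj|->].
Qed.

Lemma sum_rest_const1 : \sum_(i < m | val i != 0%N) (1 : R) = m%:R - 1.
Proof.
rewrite (eq_bigl (predC1 i0)) => [|i]; last by rewrite /= -i0_first (inj_eq val_inj).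
rewrite sumr_const cardC1 card_ord.
by rewrite -[in RHS](ltn_predK (ltn_ord i0)) mulrSr addrK.
Qed.

Lemma S2_eq_first v0 x s : S2_eq A c d i0 v0 x s = sqnorm x - v0 ^+ 2 + s i0 ^+ 2.
Proof. by rewrite /S2_eq (homogenize_sqnorm_sub1 f1_sphere). Qed.

Section Forward.
Hypothesis U_pos : forall i, val i != 0%N -> 0 < U i.
Hypothesis f_bounded : forall i, val i != 0%N ->
  forall x, sqnorm x <= 2 -> `|fq A c d i x| <= U i.

Lemma S2_feasible_of_S1 eps : 0 <= eps -> eps <= 1 ->
  S1_feasible A c d eps -> S2_feasible A c d U eps.
Proof.
move=> eps_ge0 eps_le1 [x fx].
have x_ball : sqnorm x <= 2 by have := fx i0; rewrite f1_sphere; lra.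
pose slack i := Num.max 0 (- fq A c d i x).
have slack_ge0 i : 0 <= slack i by rewrite le_max lexx.
have slack_leU i : val i != 0%N -> slack i <= U i.
  move=> /f_bounded /(_ x x_ball) fU.
  have fN : - fq A c d i x <= U i by rewrite (le_trans _ fU) // -normrN ler_norm.
  by rewrite ge_max fN (le_trans _ fU).
have slack_sq i : Num.sqrt (slack i) ^+ 2 = slack i by rewrite sqr_sqrtr.
have mid_one i : val i != 0%N ->
    (Num.sqrt (slack i) ^+ 2 + Num.sqrt (U i - slack i) ^+ 2) / U i = 1.
  move=> i_rest; rewrite slack_sq sqr_sqrtr ?subr_ge0 ?slack_leU //.
  by rewrite addrC subrK divff // gt_eqF ?U_pos.
exists 1, x, (fun i => Num.sqrt (slack i)), (fun i => Num.sqrt (U i - slack i)).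
split; [|split].
- move=> i; rewrite /S2_eq slack_sq mul1r expr1n mulr1.
  exact: slack_residual (fx i) eps_ge0.
- by move=> i i_rest; rewrite /S2_mid mid_one // expr1n subrr normr0.
- rewrite /S2_last sum_first slack_sq (eq_bigr (fun=> 1)) ?sum_rest_const1;
    last by move=> i /mid_one.
  have -> : sqnorm x + slack i0 + (m%:R - 1) + 1 ^+ 2 - m.+1%:R =
            fq A c d i0 x + slack i0 by rewrite f1_sphere mulrS; ring.
  exact: slack_residual (fx i0) eps_ge0.
Qed.

End Forward.

Lemma v0_sq_lower eps v0 x (s w : 'I_m -> R) :
  `|S2_eq A c d i0 v0 x s| <= eps ->
  (forall i, val i != 0%N -> `|S2_mid U i v0 s w| <= eps) ->
  `|S2_last U v0 x s w| <= eps ->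
  1 - eps <= v0 ^+ 2.
Proof.
rewrite S2_eq_first /S2_last sum_first !ler_norml => /andP[_ h1] h2 /andP[h3 _].
have h_rest : \sum_(i < m | val i != 0%N) (s i ^+ 2 + w i ^+ 2) / U i
              <= (v0 ^+ 2 + eps) * (m%:R - 1).
  rewrite -sum_rest_const1 mulr_sumr; apply: ler_sum => i /h2.
  by rewrite /S2_mid ler_norml mulr1 => /andP[_]; lra.
have m_ge1 : (1 : R) <= m%:R by rewrite ler1n (leq_ltn_trans _ (ltn_ord i0)).
have := sqr_ge0 (s i0); rewrite mulrS in h3; nra.
Qed.

Lemma S1_feasible_of_S2 eps : eps < 1 ->
  S2_feasible A c d U eps -> S1_feasible A c d (eps / (1 - eps)).
Proof.
move=> eps_lt1 [v0 [x [s [w [h1 [h2 h3]]]]]].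
have v0_lower := v0_sq_lower (h1 i0) h2 h3.
have eps_ge0 : 0 <= eps := le_trans (normr_ge0 _) (h1 i0).
have v0_neq0 : v0 != 0.
  by apply: contraTneq v0_lower => ->; rewrite expr0n /= subr_le0 -ltNge.
exists (v0^-1 *: x) => i; rewrite ler_pdivlMr ?subr_gt0 //.
have := homogenize_scale (A i) (c i) (d i) x v0_neq0.
rewrite -/(fq A c d i _) => f_scaled.
have := h1 i; rewrite /S2_eq -f_scaled ler_norml => /andP[_].
have := sqr_ge0 (s i); nra.
Qed.

End Reduction.

Theorem lemma2 (R : realType) (m n : nat) (hm : (2 <= m)%N) (hn : (2 <= n)%N)
  (A : 'I_m -> 'M[R]_n) (c : 'I_m -> 'cV[R]_n) (d : 'I_m -> R) (U : 'I_m -> R)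
  (hsym : forall i : 'I_m, (A i)^T = A i)
  (hf1 : forall i : 'I_m, val i = 0%N ->
           forall x : 'cV[R]_n, fq A c d i x = sqnorm x - 1)
  (hUpos : forall i : 'I_m, val i != 0%N -> 0 < U i)
  (hUbnd : forall i : 'I_m, val i != 0%N ->
             forall x : 'cV[R]_n, sqnorm x <= 2 -> `|fq A c d i x| <= U i)
  (eps : R) (heps0 : 0 <= eps) (heps1 : eps < 1 / 2) :
  (S1_feasible A c d eps -> S2_feasible A c d U (m%:R * eps)) /\
  (S2_feasible A c d U eps ->
     S1_feasible A c d ((2 * n + 1)%:R * S2_maxcoef A c d U * eps)).
Proof.
pose i0 : 'I_m := Ordinal (ltnW hm).
have i0_first : val i0 = 0%N by [].
have f1_sphere := hf1 i0 i0_first.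
have eps_lt1 : eps < 1 by lra.
split.
- move=> /(S2_feasible_of_S1 i0_first f1_sphere hUpos hUbnd heps0 (ltW eps_lt1)).
  apply: S2_feasible_le.
  have m_ge2 : (2 : R) <= m%:R by rewrite (ler_nat R 2 m).
  nra.
- move=> /(S1_feasible_of_S2 i0_first f1_sphere eps_lt1).
  apply: S1_feasible_le; rewrite ler_pdivrMr ?subr_gt0; last by lra.
  have KM_ge2 : 2 <= (2 * n + 1)%:R * S2_maxcoef A c d U.
    have n_ge1 : (1 : R) <= n%:R by rewrite ler1n ltnW.
    have M_ge1 := S2_maxcoef_ge1 A c d U; rewrite natrD natrM; nra.
  have eps_le : eps <= 2 * (eps * (1 - eps)) by nra.
  rewrite -[_ * _ * (1 - eps)]mulrA (le_trans eps_le) //.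
  by apply: ler_wpM2r KM_ge2; rewrite mulr_ge0 // subr_ge0 ltW.
Qed.
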